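(* Let $C_{TS}>0$ be a fixed absolute constant and, for a problem instance, let $N_{TS}=C_{TS}\,\varepsilon_{TS}^{-2}\log(\delta_{TS}^{-1})$ where $\varepsilon_{TS}=\min_{i,j\in[K]}\mathbb E[(\mu_i-\mu_j)_+]$ and $\delta_{TS}=\min_{i\in[K]}\Pr[A^*=i]$. Let $\mathcal C$ be a fixed finite collection of priors on $[0,1]$ such that every problem instance (with any number of arms) whose priors all belong to $\mathcal C$ satisfies pairwise non-dominance. Then there is a constant $c_{\mathcal C}$ depending only on $\mathcal C$ (and $C_{TS}$) such that for every $K$ and every $K$-armed problem instance with all priors $\mathcal P_i\in\mathcal C$, $N_{TS}\leq c_{\mathcal C}\,K$.
   Context: A problem instance consists of $K$ arms with mean rewards $\mu_1,\dots,\mu_K\in[0,1]$ drawn independently, $\mu_i\sim\mathcal P_i$. $A^*=\min(\arg\max_j\mu_j)$. $(x)_+=\max(x,0)$. Pairwise non-dominance: for all arms $i\neq j$, $\Pr[\mu_j<\mathbb E[\mu_i]]>0$. *)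

From HB Require Import structures.
From mathcomp Require Import all_boot all_order all_algebra.
From mathcomp Require Import all_classical all_reals all_analysis.
Set Implicit Arguments. Unset Strict Implicit. Unset Printing Implicit Defensive.
Import Order.TTheory GRing.Theory Num.Theory.
Local Open Scope classical_set_scope.
Local Open Scope ring_scope.

Section Defs.
Variable R : realType.

Definition prior_on_01 (p : probability R R) : Prop := p `[0%R, 1%R]%classic = 1%E.

Definition prior_mean (p : probability R R) : \bar R := (\int[p]_x (x%:E))%E.

Definition pairwise_nondominance (K : nat) (p : 'I_K -> probability R R) : Prop :=
  forall i j : 'I_K, i != j -> (0 < p j [set x | (x%:E < prior_mean (p i))%E])%E.

Definition mutually_independent d (T : measurableType d) (P : probability T R)
  (K : nat) (mu : 'I_K -> T -> R) : Prop :=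
  forall A : 'I_K -> set R, (forall i, measurable (A i)) ->
    P [set t | forall i, A i (mu i t)] = (\prod_(i < K) P (mu i @^-1` A i))%E.

Definition has_law d (T : measurableType d) (P : probability T R)
  (X : T -> R) (q : probability R R) : Prop :=
  forall A : set R, measurable A -> P (X @^-1` A) = q A.

(* i = A^* = min (argmax_j v j). *)
Definition is_Astar (K : nat) (v : 'I_K -> R) (i : 'I_K) : Prop :=
  (forall j, v j <= v i) /\ (forall j : 'I_K, (j < i)%N -> v j < v i).

Definition eps_TS d (T : measurableType d) (P : probability T R)
  (K : nat) (mu : 'I_K -> T -> R) : R :=
  fine (\big[Order.min/+oo%E]_(i < K) \big[Order.min/+oo%E]_(j < K | j != i)
          (\int[P]_t ((Num.max (mu i t - mu j t) 0)%:E))%E).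

Definition delta_TS d (T : measurableType d) (P : probability T R)
  (K : nat) (mu : 'I_K -> T -> R) : R :=
  fine (\big[Order.min/+oo%E]_(i < K) P [set t | is_Astar (fun j => mu j t) i]).

Definition N_TS (C_TS : R) d (T : measurableType d) (P : probability T R)
  (K : nat) (mu : 'I_K -> T -> R) : R :=
  C_TS * (eps_TS P mu) ^- 2 * ln ((delta_TS P mu)^-1).

End Defs.

(* Applying non-dominance to the two-arm instance (p, p'), every prior p' of C
   charges (-oo, E p); by finiteness of C there are levels r_p < t_p such that
   p charges [t_p, +oo) and every prior of C charges (-oo, r_p].  Let g > 0 be
   the least gap t_p - r_p and gamma > 0 the least of these masses.  For
   independent arms, the event {mu_i >= t, mu_j <= r} has probability at least
   gamma^2 and forces (mu_i - mu_j)_+ >= g, so eps_TS >= g gamma^2; the event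
   {mu_i >= t, mu_j <= r for all j <> i} forces A^* = i and has probability at
   least gamma^K, so log(1/delta_TS) <= K log(1/gamma).  Hence
   N_TS <= C_TS (g gamma^2)^-2 log(1/gamma) K. *)

From HB Require Import structures.
From mathcomp Require Import all_boot all_order all_algebra.
From mathcomp Require Import all_classical all_reals all_analysis.
From mathcomp Require Import measurable_realfun lra.
Import Order.TTheory GRing.Theory Num.Theory.
Local Open Scope classical_set_scope.
Local Open Scope ring_scope.

Set Implicit Arguments.
Unset Strict Implicit.
Unset Printing Implicit Defensive.

Lemma expe_le_prode (R : realType) (I : finType) (F : I -> \bar R) (c : R) :
  0 <= c -> (forall i, c%:E <= F i)%E -> ((c ^+ #|I|)%:E <= \prod_i F i)%E.
Proof.
move=> c_ge0 cF; rewrite -prodr_const.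
suff [] : 0 <= \prod_(i : I) c /\ ((\prod_(i : I) c)%:E <= \prod_i F i)%E by [].
apply: (big_ind2 (fun a b => 0 <= a /\ (a%:E <= b)%E)) => //.
move=> a1 a2 b1 b2 [a1_ge0 ab1] [a2_ge0 ab2].
by split; [exact: mulr_ge0 | rewrite EFinM; exact: lee_pmul].
Qed.

Lemma fine_between (R : numDomainType) (a b : R) (x : \bar R) :
  (a%:E <= x)%E -> (x <= b%:E)%E -> a <= fine x <= b.
Proof. by case: x => [x| |] //=; rewrite !lee_fin => -> ->. Qed.

Lemma lnV_le_mul_lnV (R : realType) (a b : R) (K : nat) :
  0 < a -> a ^+ K <= b -> ln b^-1 <= ln a^-1 * K%:R.
Proof.
move=> a_gt0 aKb; have b_gt0 : 0 < b by rewrite (lt_le_trans _ aKb) ?exprn_gt0.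
rewrite mulr_natr -lnXn ?invr_gt0 // exprVn.
by rewrite ler_ln ?posrE ?invr_gt0 ?exprn_gt0 // lef_pV2 ?posrE ?exprn_gt0.
Qed.

Lemma exists_gt0_lower_bound (R : realFieldType) (I : finType) (f : I -> R) :
  (forall i, 0 < f i) -> exists2 c, 0 < c & forall i, c <= f i.
Proof.
move=> f_gt0; exists (\big[Num.min/1]_i f i); last by move=> i; exact: bigmin_le.
by apply: lt_bigmin => // i _; exact: f_gt0.
Qed.

Lemma exists_lt_measure_itvNyc_gt0 (R : realType) (mu : {measure set R -> \bar R})
    (m : R) :
  (0 < mu `]-oo, m[%classic)%E ->
  exists2 r, r < m & (0 < mu `]-oo, r]%classic)%E.
Proof.
move=> mu_gt0; apply: contrapT => /forall2NP null_below.
have mu0 r : r < m -> mu `]-oo, r]%classic = 0%E.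
  move=> rm; apply/eqP; rewrite eq_le measure_ge0 andbT leNgt.
  by apply/negP => mu_r; case: (null_below r) => H; apply: H.
suff : (mu `]-oo, m[%classic <= \sum_(0 <= k <oo) mu `]-oo, (m - k.+1%:R^-1)%R]%classic)%E.
  rewrite eseries0 => [|k _ _]; first by rewrite leNgt mu_gt0.
  by apply: mu0; rewrite ltrBlDr ltrDl invr_gt0 ltr0Sn.
apply: measure_sigma_subadditive => // x /=; rewrite in_itv /= => xm.
have [k xk] := ltr_add_invr xm.
by exists k => //=; rewrite in_itv /= lerBrDr ltW.
Qed.

Lemma exists_common_lt_measure_itvNyc_gt0 (R : realType) (I : finType)
    (mu : I -> {measure set R -> \bar R}) (m : R) :
  (forall i, 0 < mu i `]-oo, m[%classic)%E ->
  exists2 r, r < m & forall i, (0 < mu i `]-oo, r]%classic)%E.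
Proof.
move=> mu_gt0.
have /choice[f fP] : forall i, exists r, r < m /\ (0 < mu i `]-oo, r]%classic)%E.
  by move=> i; have [r rm mu_r] := exists_lt_measure_itvNyc_gt0 (mu_gt0 i); exists r.
exists (\big[Num.max/(m - 1)]_i f i).
  by apply: bigmax_lt => [|i _]; [rewrite ltrBlDr ltrDl | case: (fP i)].
move=> i; case: (fP i) => _ /lt_le_trans; apply; apply: le_measure; rewrite ?inE //.
by move=> x /=; rewrite !in_itv /= => /le_trans; apply; exact: le_bigmax.
Qed.

Section priors.
Variable R : realType.
Implicit Types (q : probability R R) (D : set R).

Lemma prior_meanE q D : measurable D -> q D = 1%E ->
  prior_mean q = (\int[q]_(x in D) x%:E)%E.
Proof.
move=> mD qD1; have qnD0 : q (~` D) = 0%E by rewrite probability_setC // qD1 subee.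
rewrite integral_mkcond /prior_mean.
apply: ae_eq_integral => //.
- rewrite (_ : _ \_ D = (fun x => (x * \1_D x)%:E)); last first.
    by apply/funext => x; rewrite patchE indicE; case: (x \in D); rewrite ?mulr1 ?mulr0.
  by apply/measurable_EFinP/measurable_funM => //; exact: measurable_indic.
- exists (~` D); split; [exact: measurableC | exact: qnD0 |].
  by move=> x /= nxD Dx; apply: nxD => _; rewrite patchE mem_set.
Qed.

Lemma prior_mean_ge0_le q D (s : R) : measurable D -> q D = 1%E ->
  (forall x, D x -> 0 <= x <= s) -> (0 <= prior_mean q <= s%:E)%E.
Proof.
move=> mD qD1 Dbound; rewrite (prior_meanE mD qD1); apply/andP; split.
  by apply: integral_ge0 => x /Dbound /andP[x0 _]; rewrite lee_fin.
apply: (@le_trans _ _ (\int[q]_(x in D) cst s%:E x)%E).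
  apply: ge0_le_integral => //.
  - by move=> x /Dbound /andP[x0 _]; rewrite lee_fin.
  - by move=> x /Dbound /andP[_ xs]; rewrite lee_fin.
by rewrite integral_cst // (_ : (s%:E * _)%E = s%:E) // -[RHS]mule1; congr (_ * _)%E.
Qed.

Lemma prior_mean_fin_num q : prior_on_01 q -> prior_mean q \is a fin_num.
Proof.
move=> q01; have /andP[m0 m1] : (0 <= prior_mean q <= 1%:E)%E.
  apply: (@prior_mean_ge0_le q `[0%R, 1%R] 1 _ q01) => // x /=; rewrite in_itv.
by rewrite ge0_fin_numE // (le_lt_trans m1) ?ltry.
Qed.

Lemma prior_mass_above_gt0 q (t : R) : prior_on_01 q ->
  (t%:E < prior_mean q)%E -> (0 < q `[t, +oo[%classic)%E.
Proof.
move=> q01 tm; rewrite lt0e measure_ge0 andbT; apply/eqP => above0.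
pose D := (`[0%R, 1%R] `\` `[t, +oo[)%classic.
have qD1 : q D = 1%E.
  have q01' : (q : {content set R -> \bar R}) `[0%R, 1%R]%classic = 1%E := q01.
  rewrite measureD // q01' ?ltry // [X in (_ - X)%E](_ : _ = 0%E) ?sube0 //.
  by apply/eqP; rewrite eq_le measure_ge0 andbT -above0 measureIr.
have /andP[_] : (0 <= prior_mean q <= t%:E)%E.
  apply: (@prior_mean_ge0_le q D t _ qD1); first exact: measurableD.
  move=> x [/=]; rewrite !in_itv /= andbT => /andP[x0 _].
  by move/negP; rewrite -ltNge => /ltW ->; rewrite x0.
by rewrite leNgt tm.
Qed.

End priors.

Section levels.
Variable R : realType.

Lemma exists_separating_levels (n : nat) (Cfam : 'I_n -> probability R R)
    (hprior : forall k, prior_on_01 (Cfam k))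
    (hnd : forall (K : nat) (p : 'I_K -> probability R R),
       (forall i, exists k, p i = Cfam k) -> pairwise_nondominance p)
    (k : 'I_n) :
  exists r t : R, [/\ r < t, (0 < Cfam k `[t, +oo[%classic)%E &
    forall k', (0 < Cfam k' `]-oo, r]%classic)%E].
Proof.
have [m mE] : exists m, prior_mean (Cfam k) = m%:E.
  by exists (fine (prior_mean (Cfam k))); rewrite fineK ?prior_mean_fin_num.
have below_m k' : (0 < Cfam k' `]-oo, m[%classic)%E.
  (* the two arms may carry the same prior: k = k' is allowed *)
  pose p (l : 'I_2) := if l == ord0 then Cfam k else Cfam k'.
  have /(_ ord0 ord_max isT) : pairwise_nondominance p.
    by apply: hnd => l; rewrite /p; case: ifP => _; [exists k | exists k'].
  rewrite /p /= mE (_ : [set x | _] = `]-oo, m[%classic) //.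
have [r rm r_below] := exists_common_lt_measure_itvNyc_gt0
  (mu := fun k' => Cfam k' : {measure set R -> \bar R}) below_m.
have [rt tm] := midf_lt rm.
exists r, ((r + m) / 2); split => //.
by apply: prior_mass_above_gt0; rewrite ?mE ?lte_fin.
Qed.

Definition level_separated {I : Type} (q : I -> probability R R) (r t : I -> R)
    (g gamma : R) : Prop :=
  forall i, [/\ g <= t i - r i, (gamma%:E <= q i `[t i, +oo[%classic)%E &
    forall j, (gamma%:E <= q j `]-oo, r i]%classic)%E].

Lemma nondominance_level_separated (n : nat) (Cfam : 'I_n -> probability R R)
    (hprior : forall k, prior_on_01 (Cfam k))
    (hnd : forall (K : nat) (p : 'I_K -> probability R R),
       (forall i, exists k, p i = Cfam k) -> pairwise_nondominance p) :
  exists (r t : 'I_n -> R) (g gamma : R),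
    [/\ 0 < g, 0 < gamma & level_separated Cfam r t g gamma].
Proof.
have /choice[r /choice[t rtP]] := exists_separating_levels hprior hnd.
have [g g_gt0 g_le] : exists2 g, 0 < g & forall k, g <= t k - r k.
  by apply: exists_gt0_lower_bound => k; rewrite subr_gt0; case: (rtP k).
have probE (q : probability R R) (A : set R) : measurable A -> (fine (q A))%:E = q A.
  by move=> mA; rewrite fineK // fin_num_measure.
pose mass (kk' : 'I_n * 'I_n) := Num.min (fine (Cfam kk'.1 `[t kk'.1, +oo[%classic))
  (fine (Cfam kk'.2 `]-oo, r kk'.1]%classic)).
have [gamma gamma_gt0 gamma_le] : exists2 gamma, 0 < gamma & forall kk', gamma <= mass kk'.
  apply: exists_gt0_lower_bound => -[k k']; case: (rtP k) => _ above below.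
  by rewrite lt_min -!lte_fin !probE // above below.
exists r, t, g, gamma; split => // k; split => [|| j]; first exact: g_le.
  by rewrite -probE // lee_fin; have := gamma_le (k, k); rewrite le_min => /andP[].
by rewrite -probE // lee_fin; have := gamma_le (k, j); rewrite le_min => /andP[].
Qed.

End levels.

Section bandit_instance.
Variables (R : realType) (d : measure_display) (T : measurableType d).
Variables (P : probability T R) (K : nat) (mu : 'I_K -> T -> R).
Variable q : 'I_K -> probability R R.
Hypothesis mu_meas : forall i, measurable_fun setT (mu i).
Hypothesis mu_indep : mutually_independent P mu.
Hypothesis mu_law : forall i, has_law P (mu i) (q i).
Hypothesis q01 : forall i, prior_on_01 (q i).

Lemma measurable_box (A : 'I_K -> set R) : (forall l, measurable (A l)) ->
  measurable [set s | forall l, A l (mu l s)].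
Proof.
move=> mA; rewrite (_ : [set s | _] = \bigcap_(l in [set: 'I_K]) (mu l @^-1` A l)).
  apply: fin_bigcap_measurable; first exact: finite_finset.
  by move=> l _; rewrite -[X in measurable X]setTI; exact: mu_meas.
by apply/seteqP; split => s /= As l => [_|]; exact: As.
Qed.

Lemma probability_box (A : 'I_K -> set R) : (forall l, measurable (A l)) ->
  P [set s | forall l, A l (mu l s)] = (\prod_(l < K) q l (A l))%E.
Proof. by move=> mA; rewrite mu_indep //; apply: eq_bigr => l _; exact: mu_law. Qed.

Lemma measurable_Astar i : measurable [set s | is_Astar (fun j => mu j s) i].
Proof.
have mpred (b : T -> bool) : measurable_fun setT b -> measurable [set s | b s].
  by move=> mb; rewrite -[X in measurable X]setTI; apply: (mb measurableT [set true]).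
rewrite (_ : [set s | _] = \bigcap_(j in [set: 'I_K])
   [set s | if (j < i)%N then mu j s < mu i s else mu j s <= mu i s]).
  apply: fin_bigcap_measurable; first exact: finite_finset.
  by move=> j _; case: (j < i)%N => /=; apply: mpred;
    [exact: measurable_fun_ltr | exact: measurable_fun_ler].
apply/seteqP; split => s /=.
  by move=> [le lt] j _; case: ltnP => ji; [exact: lt | exact: le].
move=> Astar; split => j; have := Astar j I; first by case: ltnP => // _ /ltW.
by move=> + ji; rewrite ji.
Qed.

Lemma measurable_gain i j :
  measurable_fun setT (fun s => (Num.max (mu i s - mu j s) 0)%:E).
Proof.
apply/measurable_EFinP/(measurable_maxr (f := mu i \- mu j) (g := cst 0)) => //.
exact: measurable_funB.
Qed.

Lemma gain_integral_le1 i j :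
  (\int[P]_s (Num.max (mu i s - mu j s) 0)%:E <= 1)%E.
Proof.
have in01 l : \forall s \ae P, `[0%R, 1%R]%classic (mu l s).
  exists (mu l @^-1` (~` `[0%R, 1%R]%classic)); split => //.
    by rewrite -[X in measurable X]setTI; apply: mu_meas => //; exact: measurableC.
  by rewrite mu_law ?probability_setC ?q01 ?subee //; exact: measurableC.
apply: (@le_trans _ _ (\int[P]_s (cst 1%E s))%E); last first.
  by rewrite integral_cst // mul1e probability_le1.
apply: ae_ge0_le_integral => //.
- by move=> s _; rewrite lee_fin le_max lexx orbT.
- exact: measurable_gain.
apply: filterS2 (in01 i) (in01 j) => s /=; rewrite !in_itv /=.
move=> /andP[mi0 mi1] /andP[mj0 mj1] _.
by rewrite lee_fin ge_max ler01 andbT; lra.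
Qed.

Variables (r t : 'I_K -> R) (g gamma : R).
Hypotheses (g_gt0 : 0 < g) (gamma_gt0 : 0 < gamma).
Hypothesis sep : level_separated q r t g gamma.

Lemma probability_Astar_ge i :
  ((gamma ^+ K)%:E <= P [set s | is_Astar (fun j => mu j s) i])%E.
Proof.
pose A l := if l == i then `[t i, +oo[%classic else `]-oo, r i]%classic.
have mA l : measurable (A l) by rewrite /A; case: ifP.
have [gap above below] := sep i.
apply: (@le_trans _ _ (P [set s | forall l, A l (mu l s)])).
  rewrite probability_box // -[in leLHS](card_ord K); apply: expe_le_prode => [|l].
    exact: ltW.
  by rewrite /A; case: eqP => [->|_].
apply: le_measure; rewrite ?inE; [exact: measurable_box | exact: measurable_Astar |].
move=> s /= inA; have := inA i; rewrite /A eqxx /= in_itv /= andbT => ti_le.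
have lt_i j : j != i -> mu j s < mu i s.
  move=> ji; have := inA j; rewrite /A (negbTE ji) /= in_itv /= => le_ri.
  by rewrite (le_lt_trans le_ri) // (lt_le_trans _ ti_le) // -subr_gt0 (lt_le_trans g_gt0).
split => j; first by case: (eqVneq j i) => [->|/lt_i/ltW].
by move=> ji; apply: lt_i; rewrite neq_ltn ji.
Qed.

Lemma gain_integral_ge i j : i != j ->
  ((g * gamma ^+ 2)%:E <= \int[P]_s (Num.max (mu i s - mu j s) 0)%:E)%E.
Proof.
move=> ij; pose A l := if l == i then `[t i, +oo[%classic
  else if l == j then `]-oo, r i]%classic else setT.
have mA l : measurable (A l) by rewrite /A; case: ifP => _ //; case: ifP.
have [gap above below] := sep i.
pose E := [set s | forall l, A l (mu l s)].
have mE : measurable E by exact: measurable_box.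
have PE : ((gamma ^+ 2)%:E <= P E)%E.
  rewrite probability_box // (bigD1 i) //= (bigD1 j) 1?eq_sym //= big1 ?mule1; last first.
    by move=> l /andP[/negbTE li /negbTE lj]; rewrite /A li lj probability_setT.
  rewrite /A eqxx eq_sym (negbTE ij) eqxx expr2 EFinM.
  by apply: lee_pmul; rewrite ?above ?below // lee_fin ltW.
apply: (@le_trans _ _ (\int[P]_(s in E) (Num.max (mu i s - mu j s) 0)%:E)%E); last first.
  apply: ge0_subset_integral => //; first exact: measurable_gain.
  by move=> s _; rewrite lee_fin le_max lexx orbT.
apply: (@le_trans _ _ (\int[P]_(s in E) cst g%:E s)%E).
  by rewrite integral_cst // EFinM lee_pmul // lee_fin ?exprn_ge0 ?ltW.
apply: ge0_le_integral => //.
- by move=> s _; rewrite lee_fin ltW.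
- by apply: measurable_funTS; exact: measurable_gain.
move=> s inE; rewrite lee_fin le_max; apply/orP; left.
have := inE i; have := inE j; rewrite /A eqxx eq_sym (negbTE ij) eqxx /= !in_itv /= andbT.
by move=> le_ri ti_le; apply: le_trans gap _; exact: lerB.
Qed.

Lemma eps_TS_ge : (1 < K)%N -> g * gamma ^+ 2 <= eps_TS P mu.
Proof.
move=> K_gt1; suff /andP[] : g * gamma ^+ 2 <= eps_TS P mu <= 1 by [].
apply: fine_between.
- apply: le_bigmin => [|i _]; first exact: leey.
  apply: le_bigmin => [|j ji]; first exact: leey.
  by apply: gain_integral_ge; rewrite eq_sym.
- apply: le_trans (bigmin_le _ (Ordinal (ltnW K_gt1)) _) _.
  apply: le_trans (bigmin_le_cond _ (j := Ordinal K_gt1) _ _) _ => //.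
  exact: gain_integral_le1.
Qed.

Lemma delta_TS_ge : (0 < K)%N -> gamma ^+ K <= delta_TS P mu <= 1.
Proof.
move=> K_gt0; apply: fine_between.
  by apply: le_bigmin => [|i _]; [exact: leey | exact: probability_Astar_ge].
apply: le_trans (bigmin_le _ (Ordinal K_gt0) _) _.
exact/probability_le1/measurable_Astar.
Qed.

Lemma N_TS_le (C : R) : 0 <= C -> (1 < K)%N ->
  N_TS C P mu <= C * (g * gamma ^+ 2) ^- 2 * ln gamma^-1 * K%:R.
Proof.
move=> C_ge0 K_gt1; have e0_gt0 : 0 < g * gamma ^+ 2 by rewrite mulr_gt0 ?exprn_gt0.
have e_gt0 := lt_le_trans e0_gt0 (eps_TS_ge K_gt1).
have /andP[d_ge d_le1] := delta_TS_ge (ltnW K_gt1).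
have d_gt0 : 0 < delta_TS P mu by rewrite (lt_le_trans _ d_ge) ?exprn_gt0.
rewrite /N_TS -!mulrA ler_wpM2l //; apply: ler_pM.
- by rewrite invr_ge0 exprn_ge0 ?ltW.
- by rewrite ln_ge0 // invf_ge1.
- rewrite lef_pV2 ?posrE ?exprn_gt0 //; apply: lerXn2r; rewrite ?nnegrE ?eps_TS_ge //.
  + exact: ltW e0_gt0.
  + exact: ltW e_gt0.
- exact: (lnV_le_mul_lnV gamma_gt0 d_ge).
Qed.

End bandit_instance.

Theorem corollary3p3 (R : realType) (C_TS : R) (hC : 0 < C_TS)
  (n : nat) (Cfam : 'I_n -> probability R R)
  (hprior : forall k, prior_on_01 (Cfam k))
  (hnd : forall (K : nat) (p : 'I_K -> probability R R),
           (forall i, exists k, p i = Cfam k) -> pairwise_nondominance p) :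
  exists c : R, forall (K : nat), (2 <= K)%N ->
    forall (d : measure_display) (T : measurableType d) (P : probability T R)
           (mu : 'I_K -> T -> R),
      (forall i, measurable_fun setT (mu i)) ->
      mutually_independent P mu ->
      (forall i, exists k, has_law P (mu i) (Cfam k)) ->
      0 < eps_TS P mu /\ 0 < delta_TS P mu /\
      N_TS C_TS P mu <= c * K%:R.
Proof.
have [r [t [g [gamma [g_gt0 gamma_gt0 sep]]]]] := nondominance_level_separated hprior hnd.
exists (C_TS * (g * gamma ^+ 2) ^- 2 * ln gamma^-1).
move=> K K_gt1 d T P mu mu_meas mu_indep /choice[law law_mu].
have q01 i : prior_on_01 (Cfam (law i)) := hprior (law i).
have sep_mu : level_separated (Cfam \o law) (r \o law) (t \o law) g gamma.
  by move=> i; have [gap above below] := sep (law i); split => // j; exact: below.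
split; [|split].
- apply: lt_le_trans (eps_TS_ge mu_meas mu_indep law_mu q01 g_gt0 gamma_gt0 sep_mu K_gt1).
  by rewrite mulr_gt0 ?exprn_gt0.
- have /andP[+ _] := delta_TS_ge mu_meas mu_indep law_mu g_gt0 gamma_gt0 sep_mu (ltnW K_gt1).
  by apply: lt_le_trans; rewrite exprn_gt0.
- exact: (N_TS_le mu_meas mu_indep law_mu q01 g_gt0 gamma_gt0 sep_mu (ltW hC) K_gt1).
Qed.
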